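(* Let $\mathcal{C}$ be a category that has finite biproducts, and let $X$ be an object of $\mathcal{C}$. Then $X$ is abelian if and only if the diagonal $\Delta \colon X \to X \oplus X$ is a kernel of some split epimorphism.
   Context: A category has finite biproducts if it has a zero object and every pair of objects has a biproduct, i.e. an object $X_1\oplus X_2$ with injections $i_k$ and projections $p_k$ such that $(X_1\oplus X_2,i_1,i_2)$ is a coproduct, $(X_1\oplus X_2,p_1,p_2)$ is a product, $p_k i_k = 1$ and $p_k i_j = 0$ for $j\ne k$. Such a category has a unique enrichment in commutative monoids, where $0$ is the zero morphism and $f+g = \nabla (f\oplus g)\Delta$ (with $\Delta=\begin{bmatrix}1\\1\end{bmatrix}$ the diagonal and $\nabla=\begin{bmatrix}1&1\end{bmatrix}$ the codiagonal). An object $X$ is called abelian if $1\colon X\to X$ has an additive inverse with respect to this enrichment. A kernel of $f\colon Y\to Z$ is an equaliser of $f$ and the zero morphism $0\colon Y\to Z$. *)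

Set Implicit Arguments.
Unset Strict Implicit.

Record Category := {
  Obj :> Type;
  Hom : Obj -> Obj -> Type;
  idm : forall A : Obj, Hom A A;
  comp : forall A B C : Obj, Hom B C -> Hom A B -> Hom A C;
  comp_assoc : forall (A B C D : Obj) (h : Hom C D) (g : Hom B C) (f : Hom A B),
      comp h (comp g f) = comp (comp h g) f;
  comp_id_l : forall (A B : Obj) (f : Hom A B), comp (idm B) f = f;
  comp_id_r : forall (A B : Obj) (f : Hom A B), comp f (idm A) = f
}.

Arguments Hom {C} : rename.
Arguments idm {C} : rename.
Arguments comp {C A B C0} : rename.

Notation "g \o f" := (comp g f) (at level 40, left associativity).

Section Defs.
Variable C : Category.

Record ZeroObject := {
  zobj : Obj C;
  to_zero : forall A : Obj C, Hom A zobj;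
  to_zero_uniq : forall (A : Obj C) (f : Hom A zobj), f = to_zero A;
  from_zero : forall A : Obj C, Hom zobj A;
  from_zero_uniq : forall (A : Obj C) (f : Hom zobj A), f = from_zero A
}.

Definition zero_mor (Z : ZeroObject) (A B : Obj C) : Hom A B :=
  from_zero Z B \o to_zero Z A.

Record Biproduct (Z : ZeroObject) (X1 X2 : Obj C) := {
  bobj : Obj C;
  inj1 : Hom X1 bobj;
  inj2 : Hom X2 bobj;
  proj1 : Hom bobj X1;
  proj2 : Hom bobj X2;
  copair : forall Y : Obj C, Hom X1 Y -> Hom X2 Y -> Hom bobj Y;
  copair_inj1 : forall Y (f1 : Hom X1 Y) (f2 : Hom X2 Y), copair f1 f2 \o inj1 = f1;
  copair_inj2 : forall Y (f1 : Hom X1 Y) (f2 : Hom X2 Y), copair f1 f2 \o inj2 = f2;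
  copair_uniq : forall Y (f1 : Hom X1 Y) (f2 : Hom X2 Y) (h : Hom bobj Y),
      h \o inj1 = f1 -> h \o inj2 = f2 -> h = copair f1 f2;
  pair : forall Y : Obj C, Hom Y X1 -> Hom Y X2 -> Hom Y bobj;
  pair_proj1 : forall Y (f1 : Hom Y X1) (f2 : Hom Y X2), proj1 \o pair f1 f2 = f1;
  pair_proj2 : forall Y (f1 : Hom Y X1) (f2 : Hom Y X2), proj2 \o pair f1 f2 = f2;
  pair_uniq : forall Y (f1 : Hom Y X1) (f2 : Hom Y X2) (h : Hom Y bobj),
      proj1 \o h = f1 -> proj2 \o h = f2 -> h = pair f1 f2;
  proj1_inj1 : proj1 \o inj1 = idm X1;
  proj2_inj2 : proj2 \o inj2 = idm X2;
  proj1_inj2 : proj1 \o inj2 = zero_mor Z X2 X1;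
  proj2_inj1 : proj2 \o inj1 = zero_mor Z X1 X2
}.

Record FiniteBiproducts := {
  fb_zero : ZeroObject;
  fb_biprod : forall X1 X2 : Obj C, Biproduct fb_zero X1 X2
}.

Variable FB : FiniteBiproducts.

Definition oplus (X1 X2 : Obj C) : Obj C := bobj (fb_biprod FB X1 X2).

Definition zero (A B : Obj C) : Hom A B := zero_mor (fb_zero FB) A B.

Definition diag (X : Obj C) : Hom X (oplus X X) :=
  pair (fb_biprod FB X X) (idm X) (idm X).
Definition codiag (X : Obj C) : Hom (oplus X X) X :=
  copair (fb_biprod FB X X) (idm X) (idm X).

Definition biprod_map (A A' B B' : Obj C) (f : Hom A B) (g : Hom A' B') :
    Hom (oplus A A') (oplus B B') :=
  pair (fb_biprod FB B B') (f \o proj1 (fb_biprod FB A A'))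
                           (g \o proj2 (fb_biprod FB A A')).

Definition hom_add (A B : Obj C) (f g : Hom A B) : Hom A B :=
  codiag B \o biprod_map f g \o diag A.

Definition abelian_obj (X : Obj C) : Prop :=
  exists g : Hom X X, hom_add (idm X) g = zero X X /\ hom_add g (idm X) = zero X X.

Definition is_kernel (K Y W : Obj C) (k : Hom K Y) (f : Hom Y W) : Prop :=
  f \o k = zero Y W \o k /\
  forall (T : Obj C) (h : Hom T Y), f \o h = zero Y W \o h ->
    exists! u : Hom T K, k \o u = h.

Definition split_epi (A B : Obj C) (e : Hom A B) : Prop :=
  exists s : Hom B A, e \o s = idm B.

End Defs.


Set Implicit Arguments.
Unset Strict Implicit.

(* The biproduct structure makes every hom-set a commutative monoid under
   f + g = codiag (f (+) g) diag, with composition distributing over +, and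
   diag = inj1 + inj2.  If 1 + g = 0, then diag is a kernel of the split
   epimorphism [1 g] : X (+) X -> X, because [1 g] h = 0 forces
   h1 = h1 + (g + 1) h2 = (h1 + g h2) + h2 = h2.  Conversely, let e have a
   section s and kernel diag, and put a = e inj1, b = e inj2, so a + b = e diag = 0.
   Then e (inj1 + s b) = a + b = 0, so inj1 + s b factors through diag and its
   two components agree: 1 + p1 s b = p2 s b.  Hence
   1 + (p1 s b + p2 s a) = p2 s (b + a) = 0. *)

Section BiproductAddition.
Variables (C : Category) (FB : FiniteBiproducts C).

Notation BP A B := (fb_biprod FB A B).
Notation z := (zero FB).
Notation "f + g" := (hom_add FB f g).

Lemma zero_comp (A B D : Obj C) (f : Hom A B) : z B D \o f = z A D.
Proof. unfold zero, zero_mor. rewrite <- comp_assoc. f_equal. apply to_zero_uniq. Qed.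

Lemma comp_zero (A B D : Obj C) (f : Hom B D) : f \o z A B = z A D.
Proof. unfold zero, zero_mor. rewrite comp_assoc. f_equal. apply from_zero_uniq. Qed.

Lemma pair_comp S T Y1 Y2 (f : Hom T Y1) (g : Hom T Y2) (h : Hom S T) :
  pair (BP Y1 Y2) f g \o h = pair (BP Y1 Y2) (f \o h) (g \o h).
Proof.
  apply pair_uniq; rewrite comp_assoc; [rewrite pair_proj1 | rewrite pair_proj2]; reflexivity.
Qed.

Lemma copair_comp A1 A2 Y V (f : Hom A1 Y) (g : Hom A2 Y) (k : Hom Y V) :
  k \o copair (BP A1 A2) f g = copair (BP A1 A2) (k \o f) (k \o g).
Proof.
  apply copair_uniq; rewrite <- comp_assoc; [rewrite copair_inj1 | rewrite copair_inj2];
    reflexivity.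
Qed.

Lemma pair_eta T Y1 Y2 (h : Hom T (bobj (BP Y1 Y2))) :
  h = pair (BP Y1 Y2) (proj1 (BP Y1 Y2) \o h) (proj2 (BP Y1 Y2) \o h).
Proof. apply pair_uniq; reflexivity. Qed.

Lemma pair_zero_r T Y1 Y2 (f : Hom T Y1) : pair (BP Y1 Y2) f (z T Y2) = inj1 (BP Y1 Y2) \o f.
Proof.
  symmetry; apply pair_uniq; rewrite comp_assoc.
  - rewrite proj1_inj1; apply comp_id_l.
  - rewrite proj2_inj1; apply zero_comp.
Qed.

Lemma pair_zero_l T Y1 Y2 (g : Hom T Y2) : pair (BP Y1 Y2) (z T Y1) g = inj2 (BP Y1 Y2) \o g.
Proof.
  symmetry; apply pair_uniq; rewrite comp_assoc.
  - rewrite proj1_inj2; apply zero_comp.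
  - rewrite proj2_inj2; apply comp_id_l.
Qed.

Lemma copair_inj A1 A2 : copair (BP A1 A2) (inj1 (BP A1 A2)) (inj2 (BP A1 A2)) = idm _.
Proof. symmetry; apply copair_uniq; apply comp_id_l. Qed.

Lemma biprod_map_pair T A A' B B' (f : Hom A B) (g : Hom A' B') (x : Hom T A) (y : Hom T A') :
  biprod_map FB f g \o pair (BP A A') x y = pair (BP B B') (f \o x) (g \o y).
Proof.
  unfold biprod_map, oplus. rewrite pair_comp, <- !comp_assoc, pair_proj1, pair_proj2.
  reflexivity.
Qed.

Lemma codiag_biprod_map A A' Y (a : Hom A Y) (b : Hom A' Y) :
  codiag FB Y \o biprod_map FB a b = copair (BP A A') a b.
Proof.
  unfold codiag, biprod_map, oplus.
  apply copair_uniq; rewrite <- comp_assoc, pair_comp, <- !comp_assoc.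
  - rewrite proj1_inj1, proj2_inj1, comp_id_r, comp_zero, pair_zero_r, comp_assoc,
      copair_inj1.
    apply comp_id_l.
  - rewrite proj1_inj2, proj2_inj2, comp_id_r, comp_zero, pair_zero_l, comp_assoc,
      copair_inj2.
    apply comp_id_l.
Qed.

Lemma hom_add_pair T Y (f g : Hom T Y) : f + g = codiag FB Y \o pair (BP Y Y) f g.
Proof.
  unfold hom_add, diag. rewrite <- comp_assoc, biprod_map_pair, !comp_id_r.
  reflexivity.
Qed.

Lemma copair_pair T A A' Y (a : Hom A Y) (b : Hom A' Y) (x : Hom T A) (y : Hom T A') :
  copair (BP A A') a b \o pair (BP A A') x y = (a \o x) + (b \o y).
Proof. rewrite hom_add_pair, <- biprod_map_pair, comp_assoc, codiag_biprod_map. reflexivity. Qed.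

Lemma hom_add_copair T Y (f g : Hom T Y) : f + g = copair (BP T T) f g \o diag FB T.
Proof. unfold diag. rewrite copair_pair, !comp_id_r. reflexivity. Qed.

Lemma hom_add0r T Y (f : Hom T Y) : f + z T Y = f.
Proof.
  rewrite hom_add_pair, pair_zero_r, comp_assoc. unfold codiag, oplus.
  rewrite copair_inj1.
  apply comp_id_l.
Qed.

Lemma hom_add0l T Y (f : Hom T Y) : z T Y + f = f.
Proof.
  rewrite hom_add_pair, pair_zero_l, comp_assoc. unfold codiag, oplus.
  rewrite copair_inj2.
  apply comp_id_l.
Qed.

(* Eckmann-Hilton: both sides are the composite of a 2x2 matrix with diag and codiag. *)
Lemma hom_add_interchange T Y (a b c d : Hom T Y) : (a + b) + (c + d) = (a + c) + (b + d).
Proof.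
  assert (transpose : pair (BP Y Y) (copair (BP T T) a b) (copair (BP T T) c d)
                      = copair (BP T T) (pair (BP Y Y) a c) (pair (BP Y Y) b d)).
  { symmetry; apply pair_uniq; rewrite copair_comp.
    - rewrite !pair_proj1; reflexivity.
    - rewrite !pair_proj2; reflexivity. }
  rewrite (hom_add_pair (a + b)), (hom_add_copair a b), (hom_add_copair c d),
    <- pair_comp, transpose.
  rewrite (hom_add_copair (a + c)), (hom_add_pair a c), (hom_add_pair b d),
    <- copair_comp, comp_assoc.
  reflexivity.
Qed.

Lemma hom_addA T Y (a b c : Hom T Y) : (a + b) + c = a + (b + c).
Proof.
  transitivity ((a + b) + (z T Y + c)); [rewrite hom_add0l; reflexivity |].
  rewrite hom_add_interchange, hom_add0r. reflexivity.
Qed.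

Lemma hom_addC T Y (a b : Hom T Y) : a + b = b + a.
Proof.
  transitivity ((z T Y + a) + (b + z T Y)); [rewrite hom_add0l, hom_add0r; reflexivity |].
  rewrite hom_add_interchange, hom_add0l, hom_add0r. reflexivity.
Qed.

Lemma comp_hom_addl T Y V (f g : Hom T Y) (k : Hom Y V) : k \o (f + g) = (k \o f) + (k \o g).
Proof. rewrite !hom_add_copair, comp_assoc, copair_comp. reflexivity. Qed.

Lemma comp_hom_addr S T Y (f g : Hom T Y) (h : Hom S T) : (f + g) \o h = (f \o h) + (g \o h).
Proof. rewrite !hom_add_pair, <- comp_assoc. unfold oplus. rewrite pair_comp. reflexivity. Qed.

Lemma abelian_objP X : abelian_obj FB X <-> exists g : Hom X X, idm X + g = z X X.
Proof.
  split.
  - intros [g [g_inv _]]. exists g. exact g_inv.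
  - intros [g g_inv]. exists g. split; [| rewrite hom_addC]; exact g_inv.
Qed.

Lemma diag_comp X T (f : Hom T X) : diag FB X \o f = pair (BP X X) f f.
Proof. unfold diag, oplus. rewrite pair_comp, comp_id_l. reflexivity. Qed.

Lemma diag_hom_add X : diag FB X = inj1 (BP X X) + inj2 (BP X X).
Proof. rewrite hom_add_copair, copair_inj, comp_id_l. reflexivity. Qed.

Lemma kernel_diag_proj_eq X W (e : Hom (oplus FB X X) W) T (h : Hom T (oplus FB X X)) :
  is_kernel FB (diag FB X) e -> e \o h = z _ W ->
  proj1 (BP X X) \o h = proj2 (BP X X) \o h.
Proof.
  intros [_ diag_universal] eh.
  rewrite <- (zero_comp W h) in eh.
  destruct (diag_universal T h eh) as [u [diag_u _]].
  rewrite <- diag_u, diag_comp, pair_proj1, pair_proj2. reflexivity.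
Qed.

Lemma diag_kernel_copair X (g : Hom X X) :
  idm X + g = z X X -> is_kernel FB (diag FB X) (copair (BP X X) (idm X) g).
Proof.
  intros g_inv. split.
  - rewrite zero_comp, <- hom_add_copair. exact g_inv.
  - intros T h eh. unfold oplus in *. rewrite zero_comp, (pair_eta h), copair_pair, comp_id_l in eh.
    set (h1 := proj1 (BP X X) \o h) in *.
    set (h2 := proj2 (BP X X) \o h) in *.
    assert (h12 : h1 = h2).
    { rewrite <- (hom_add0r h1), <- (zero_comp X h2), <- g_inv, (hom_addC (idm X)), comp_hom_addr,
        comp_id_l, <- hom_addA, eh.
      apply hom_add0l. }
    exists h1. split.
    + rewrite diag_comp, (pair_eta h). fold h1 h2. rewrite <- h12. reflexivity.
    + intros u diag_u. unfold h1. rewrite <- diag_u. unfold diag.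
      rewrite comp_assoc, pair_proj1. apply comp_id_l.
Qed.

Lemma kernel_diag_split_abelian X W (e : Hom (oplus FB X X) W) :
  split_epi e -> is_kernel FB (diag FB X) e -> exists g : Hom X X, idm X + g = z X X.
Proof.
  intros [s es] e_ker.
  set (p1 := proj1 (BP X X)). set (p2 := proj2 (BP X X)).
  set (a := e \o inj1 (BP X X)). set (b := e \o inj2 (BP X X)).
  assert (ab : a + b = z X W).
  { unfold a, b. rewrite <- comp_hom_addl, <- diag_hom_add, (Logic.proj1 e_ker). apply zero_comp. }
  set (v := inj1 (BP X X) + s \o b).
  assert (ev : e \o v = z X W).
  { unfold v. rewrite comp_hom_addl, comp_assoc, es, comp_id_l. exact ab. }
  assert (components : idm X + (p1 \o s) \o b = (p2 \o s) \o b).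
  { pose proof (kernel_diag_proj_eq e_ker ev) as pv.
    unfold v, p1, p2 in *.
    rewrite !comp_hom_addl, proj1_inj1, proj2_inj1, hom_add0l in pv.
    rewrite <- !comp_assoc. exact pv. }
  exists ((p1 \o s) \o b + (p2 \o s) \o a).
  rewrite <- hom_addA, components, <- comp_hom_addl, hom_addC, ab.
  apply comp_zero.
Qed.

End BiproductAddition.

Theorem theorem3p3 (C : Category) (FB : FiniteBiproducts C) (X : Obj C) :
  abelian_obj FB X <->
  exists (W : Obj C) (e : Hom (oplus FB X X) W),
    split_epi e /\ is_kernel FB (diag FB X) e.
Proof.
  split.
  - intros [g g_inv]%abelian_objP.
    exists X, (copair (fb_biprod FB X X) (idm X) g). split.
    + exists (inj1 (fb_biprod FB X X)). apply copair_inj1.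
    + exact (diag_kernel_copair g_inv).
  - intros [W [e [e_split e_ker]]].
    apply abelian_objP. exact (kernel_diag_split_abelian e_split e_ker).
Qed.
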